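(* Let $(X,Y,Z,W)$ be a solution of system (S) on $(-\infty,t_{max})$. Assume $Y,W>0$, $\lim_{t\to-\infty}(X,Y,Z,W)(t)=(0,0,1,0)$, and $\mathcal C>0$. Then: - if $X(t_0)<0$ for some $t_0$, then $X(t)<0$ for all $t\in(t_0,t_{max})$; - if $(Z-X)(t_0)<0$ for some $t_0$, then $(Z-X)(t)<0$ for all $t\in(t_0,t_{max})$. In particular, $\lim_{t\nearrow t_{max}}g(t)$ and $\lim_{t\nearrow t_{max}}W(t)/Y(t)$ exist in $\mathbb R\cup\{\pm\infty\}$.
   Context: Fix a positive integer $d$ and $q\in\mathbb R$. Put $A_2=d(d+2)$ and $A_3=\tfrac14d(d+2)^2q^2$. System (S) is $$X'=X(dX^2+Z^2-1)+\tfrac{A_2}{d}Y^2-2\tfrac{A_3}{d}W^2,\qquad Y'=Y(dX^2+Z^2-X),$$ $$Z'=Z(dX^2+Z^2-1)+A_3W^2,\qquad W'=W(dX^2+Z^2-2X+Z).$$ $g$ is a positive solution of $g'=gX$ and $\mathcal L=gY$. The first integral is $dX^2+A_2Y^2+Z^2-A_3W^2=1-\mathcal C\mathcal L^2$ with $\mathcal C$ constant; its sign does not depend on the normalization of $g$. *)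

From Stdlib Require Import Reals Lra.
Open Scope R_scope.

(* The maximal existence interval is (-oo, tmax); tmax = None encodes
   tmax = +oo, tmax = Some T encodes a finite right endpoint T. *)
Definition in_dom (tmax : option R) (t : R) : Prop :=
  match tmax with Some T => t < T | None => True end.

Definition A2 (d : nat) : R := INR d * (INR d + 2).
Definition A3 (d : nat) (q : R) : R := / 4 * INR d * (INR d + 2) ^ 2 * q ^ 2.

Definition solves_S (d : nat) (q : R) (tmax : option R) (X Y Z W : R -> R) : Prop :=
  forall t, in_dom tmax t ->
    derivable_pt_lim X t
      (X t * (INR d * X t ^ 2 + Z t ^ 2 - 1) + A2 d / INR d * Y t ^ 2
         - 2 * (A3 d q / INR d) * W t ^ 2) /\
    derivable_pt_lim Y t (Y t * (INR d * X t ^ 2 + Z t ^ 2 - X t)) /\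
    derivable_pt_lim Z t
      (Z t * (INR d * X t ^ 2 + Z t ^ 2 - 1) + A3 d q * W t ^ 2) /\
    derivable_pt_lim W t (W t * (INR d * X t ^ 2 + Z t ^ 2 - 2 * X t + Z t)).

Definition lim_minus_infty (f : R -> R) (l : R) : Prop :=
  forall eps, 0 < eps -> exists t1, forall t, t < t1 -> Rabs (f t - l) < eps.

Definition lim_at_tmax (tmax : option R) (f : R -> R) (l : R) : Prop :=
  forall eps, 0 < eps -> exists t1, in_dom tmax t1 /\
    forall t, t1 < t -> in_dom tmax t -> Rabs (f t - l) < eps.

Definition lim_at_tmax_pinfty (tmax : option R) (f : R -> R) : Prop :=
  forall M, exists t1, in_dom tmax t1 /\
    forall t, t1 < t -> in_dom tmax t -> M < f t.

Definition lim_at_tmax_minfty (tmax : option R) (f : R -> R) : Prop :=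
  forall M, exists t1, in_dom tmax t1 /\
    forall t, t1 < t -> in_dom tmax t -> f t < M.

Definition ext_lim_exists_at_tmax (tmax : option R) (f : R -> R) : Prop :=
  (exists l, lim_at_tmax tmax f l) \/ lim_at_tmax_pinfty tmax f
  \/ lim_at_tmax_minfty tmax f.

From Stdlib Require Import Reals Lra Psatz Classical.
Open Scope R_scope.

(* With [E = dX^2 + Z^2 - 1], the first integral reads [E = -C L^2 - d(d+2) Y^2 + a3 W^2], and
   [(W/Y)' = (W/Y)(Z - X)].  First [Z > 0] and [S = dX + Z - 1 < 0]: at a zero of [S] one has
   [S' = -C L^2 < 0], and [S >= 0] on a half-line is incompatible with [S -> 0] at [-oo].
   While [X < 0], [W/Y] increases, so the coefficient [d(d+2) - 2 a3 (W/Y)^2] of [Y^2/d] in [X']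
   decreases; it is negative wherever [X < 0], since otherwise [X' > 0] somewhere on the way
   down from [X = 0] at [-oo], and then it forbids [X] from returning to [0].  The argument for
   [Z - X] is symmetric, using [E < 0] when [0 < Z < X].  Hence [g' = gX] and [(W/Y)'] change
   sign at most once, so [g] and [W/Y] are eventually monotone. *)

Lemma continuity_pt_ball f x eps :
  continuity_pt f x -> 0 < eps ->
  exists del, 0 < del /\ forall y, Rabs (y - x) < del -> Rabs (f y - f x) < eps.
Proof.
  intros Hc He. destruct (Hc eps He) as [del [Hdel Hy]].
  exists del; split; [exact Hdel|]. intros y Hyx.
  destruct (Req_dec y x) as [->|Hne].
  - rewrite Rminus_diag, Rabs_R0; exact He.
  - apply Hy; split; [split; [exact I|congruence]|exact Hyx].
Qed.

Lemma derivable_pt_lim_continuity_pt f x l :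
  derivable_pt_lim f x l -> continuity_pt f x.
Proof. intros Hd; apply derivable_continuous_pt; exists l; exact Hd. Qed.

Lemma first_crossing (f : R -> R) a b c :
  a < b -> (forall x, a <= x <= b -> continuity_pt f x) -> f a < c -> c <= f b ->
  exists t1, a < t1 <= b /\ f t1 = c /\ forall s, a <= s < t1 -> f s < c.
Proof.
  intros Hab Hc Ha Hb.
  set (E := fun x => a <= x <= b /\ forall s, a <= s <= x -> f s < c).
  assert (HEa : E a).
  { split; [lra|]. intros s Hs. replace s with a by lra. exact Ha. }
  assert (Hbd : bound E) by (exists b; intros x [Hx _]; lra).
  destruct (completeness E Hbd (ex_intro _ a HEa)) as [m [Hub Hlub]].
  assert (Ham : a <= m) by (apply Hub; exact HEa).
  assert (Hmb : m <= b) by (apply Hlub; intros x [Hx _]; lra).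
  assert (below : forall s, a <= s < m -> f s < c).
  { intros s Hs. apply NNPP; intro Hfs.
    assert (m <= s); [|lra].
    apply Hlub. intros x [Hx Hxs]. apply Rnot_lt_le; intro Hsx.
    apply Hfs, Hxs; lra. }
  destruct (Rtotal_order (f m) c) as [Hlt|[Heq|Hgt]].
  - (* f < c persists a little beyond m, contradicting the supremum *)
    exfalso.
    destruct (continuity_pt_ball f m (c - f m) (Hc m (conj Ham Hmb))) as [del [Hdel Hy]]; [lra|].
    destruct (Req_dec m b) as [->|Hmb']; [lra|].
    set (y := Rmin b (m + del / 2)).
    assert (m < y) by (apply Rmin_glb_lt; lra).
    assert (y <= b) by apply Rmin_l.
    assert (y <= m + del / 2) by apply Rmin_r.
    assert (HEy : E y).
    { split; [lra|]. intros s Hs.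
      destruct (Rlt_dec s m); [apply below; lra|].
      assert (Hsm : Rabs (s - m) < del) by (rewrite Rabs_right; lra).
      specialize (Hy s Hsm). apply Rabs_def2 in Hy. lra. }
    specialize (Hub y HEy). lra.
  - exists m. destruct (Req_dec m a) as [->|Hma]; [lra|].
    split; [lra|split; [exact Heq|exact below]].
  - exfalso.
    destruct (continuity_pt_ball f m (f m - c) (Hc m (conj Ham Hmb))) as [del [Hdel Hy]]; [lra|].
    destruct (Req_dec m a) as [->|Hma]; [lra|].
    set (s := Rmax a (m - del / 2)).
    assert (s < m) by (apply Rmax_lub_lt; lra).
    assert (a <= s) by apply Rmax_l.
    assert (m - del / 2 <= s) by apply Rmax_r.
    assert (Hsm : Rabs (s - m) < del) by (rewrite Rabs_left; lra).
    specialize (Hy s Hsm). apply Rabs_def2 in Hy.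
    assert (f s < c) by (apply below; lra). lra.
Qed.

Lemma deriv_nonneg_of_below_on_left f x l a :
  derivable_pt_lim f x l -> a < x -> (forall s, a <= s < x -> f s < f x) -> 0 <= l.
Proof.
  intros Hd Hax Hs. apply Rnot_lt_le; intro Hl.
  destruct (Hd (- l)) as [del Hdel]; [lra|].
  pose proof (cond_pos del) as Hdel0.
  set (k := Rmin (del / 2) ((x - a) / 2)).
  assert (k <= del / 2) by apply Rmin_l.
  assert (k <= (x - a) / 2) by apply Rmin_r.
  assert (0 < k) by (apply Rmin_glb_lt; lra).
  assert (Hk : Rabs (- k) < del) by (rewrite Rabs_left; lra).
  specialize (Hdel (- k) ltac:(lra) Hk).
  assert (Hfx : f (x + - k) < f x) by (apply Hs; lra).
  assert (Hq : 0 < (f (x + - k) - f x) / - k).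
  { replace ((f (x + - k) - f x) / - k) with ((f x - f (x + - k)) / k) by (field; lra).
    apply Rdiv_lt_0_compat; lra. }
  apply Rabs_def2 in Hdel. lra.
Qed.

(* Barrier argument: at the first zero of [f] after [a], [f'] cannot be negative. *)
Lemma neg_persists (f f' : R -> R) a b :
  a < b -> (forall x, a <= x <= b -> derivable_pt_lim f x (f' x)) -> f a < 0 ->
  (forall t, a < t <= b -> f t = 0 -> (forall s, a <= s < t -> f s < 0) -> f' t < 0) ->
  f b < 0.
Proof.
  intros Hab Hd Ha Hbar. apply Rnot_le_lt; intro Hb.
  destruct (first_crossing f a b 0 Hab) as [t1 [Ht1 [Hf1 Hbelow]]]; auto.
  { intros x Hx. exact (derivable_pt_lim_continuity_pt _ _ _ (Hd x Hx)). }
  assert (Hnn : 0 <= f' t1).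
  { apply (deriv_nonneg_of_below_on_left f t1 _ a (Hd t1 ltac:(lra))); [lra|].
    intros s Hs. rewrite Hf1. apply Hbelow; lra. }
  specialize (Hbar t1 Ht1 Hf1 Hbelow). lra.
Qed.

Lemma deriv_nonneg_le f f' a b :
  a <= b -> (forall c, a <= c <= b -> derivable_pt_lim f c (f' c)) ->
  (forall c, a < c < b -> 0 <= f' c) -> f a <= f b.
Proof.
  intros Hab Hd Hp. destruct (Req_dec a b) as [->|Hne]; [lra|].
  destruct (MVT_cor2 f f' a b ltac:(lra) Hd) as [c [Hc1 Hc2]].
  specialize (Hp c Hc2). nra.
Qed.

Lemma deriv_pos_lt f f' a b :
  a < b -> (forall c, a <= c <= b -> derivable_pt_lim f c (f' c)) ->
  (forall c, a < c < b -> 0 < f' c) -> f a < f b.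
Proof.
  intros Hab Hd Hp. destruct (MVT_cor2 f f' a b Hab Hd) as [c [Hc1 Hc2]].
  specialize (Hp c Hc2). nra.
Qed.

Lemma deriv_neg_lt f f' a b :
  a < b -> (forall c, a <= c <= b -> derivable_pt_lim f c (f' c)) ->
  (forall c, a < c < b -> f' c < 0) -> f b < f a.
Proof.
  intros Hab Hd Hp. destruct (MVT_cor2 f f' a b Hab Hd) as [c [Hc1 Hc2]].
  specialize (Hp c Hc2). nra.
Qed.

Lemma derivable_pt_lim_mul_exp f k x l m :
  derivable_pt_lim f x l -> derivable_pt_lim k x m ->
  derivable_pt_lim (fun t => f t * exp (k t)) x (l * exp (k x) + f x * (exp (k x) * m)).
Proof.
  intros Hf Hk.
  apply (derivable_pt_lim_mult f (fun t => exp (k t))); [exact Hf|].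
  apply (derivable_pt_lim_comp k exp); [exact Hk|apply derivable_pt_lim_exp].
Qed.

(* [f e^t] is nondecreasing as long as [f >= 0]. *)
Lemma pos_persists (f f' : R -> R) a b :
  a <= b -> (forall x, a <= x <= b -> derivable_pt_lim f x (f' x)) -> 0 < f a ->
  (forall x, a <= x <= b -> 0 <= f x -> - f x <= f' x) -> 0 < f b.
Proof.
  intros Hab Hd Ha Hge. apply Rnot_le_lt; intro Hb.
  assert (Hab' : a < b) by (destruct (Req_dec a b) as [->|]; lra).
  destruct (first_crossing (fun s => - f s) a b 0 Hab') as [z [Hz [Hfz Hbelow]]];
    [|lra|lra|].
  { intros x Hx. apply continuity_pt_opp.
    exact (derivable_pt_lim_continuity_pt _ _ _ (Hd x Hx)). }
  assert (Hmono : f a * exp a <= f z * exp z).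
  { apply (deriv_nonneg_le (fun u => f u * exp u)
             (fun u => f' u * exp u + f u * (exp u * 1))); [lra| |].
    - intros c Hc. apply (derivable_pt_lim_mul_exp f (fun u => u)).
      + apply Hd; lra.
      + apply derivable_pt_lim_id.
    - intros c Hc.
      assert (Hfc : 0 <= f c) by (assert (- f c < 0) by (apply Hbelow; lra); lra).
      specialize (Hge c ltac:(lra) Hfc). pose proof (exp_pos c). nra. }
  assert (f z = 0) by lra.
  pose proof (exp_pos a). nra.
Qed.

(* Gronwall-type bound: [f e^(-t)] is nondecreasing when [f <= f']. *)
Lemma le_mul_exp_of_le_deriv (f f' : R -> R) T :
  (forall s, s <= T -> derivable_pt_lim f s (f' s)) ->
  (forall s, s <= T -> f s <= f' s) ->
  forall s, s <= T -> f s <= f T * exp (s - T).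
Proof.
  intros Hd Hle s Hs.
  assert (Hmono : f s * exp (- s) <= f T * exp (- T)).
  { apply (deriv_nonneg_le (fun u => f u * exp (- u))
             (fun u => f' u * exp (- u) + f u * (exp (- u) * -1))); [lra| |].
    - intros c Hc. apply (derivable_pt_lim_mul_exp f (fun u => - u)).
      + apply Hd; lra.
      + apply (derivable_pt_lim_opp id), derivable_pt_lim_id.
    - intros c Hc. specialize (Hle c ltac:(lra)). pose proof (exp_pos (- c)). nra. }
  replace (f s) with (f s * exp (- s) * exp s)
    by (rewrite Rmult_assoc, <- exp_plus, Rplus_opp_l, exp_0; ring).
  replace (exp (s - T)) with (exp (- T) * exp s) by (rewrite <- exp_plus; f_equal; ring).
  pose proof (exp_pos s). nra.
Qed.

Lemma lim_minus_infty_near f l eps t :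
  lim_minus_infty f l -> 0 < eps ->
  exists T, T < t /\ forall s, s <= T -> Rabs (f s - l) < eps.
Proof.
  intros Hf He. destruct (Hf eps He) as [t1 Ht1].
  exists (Rmin t t1 - 1). split.
  - pose proof (Rmin_l t t1). lra.
  - intros s Hs. apply Ht1. pose proof (Rmin_r t t1). lra.
Qed.

Lemma lim_minus_infty_lincomb (f g h : R -> R) l m a b k L :
  (forall t, h t = a * f t + b * g t + k) -> a * l + b * m + k = L ->
  lim_minus_infty f l -> lim_minus_infty g m -> lim_minus_infty h L.
Proof.
  intros Hh HL Hf Hg eps He.
  pose proof (Rabs_pos a) as Ha. pose proof (Rabs_pos b) as Hb.
  set (e := eps / (Rabs a + Rabs b + 1)).
  assert (He' : 0 < e) by (apply Rdiv_lt_0_compat; lra).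
  assert (Heps : e * (Rabs a + Rabs b + 1) = eps) by (unfold e; field; lra).
  destruct (Hf e He') as [t1 Ht1]. destruct (Hg e He') as [t2 Ht2].
  exists (Rmin t1 t2). intros t Ht.
  assert (Hft := Ht1 t ltac:(pose proof (Rmin_l t1 t2); lra)).
  assert (Hgt := Ht2 t ltac:(pose proof (Rmin_r t1 t2); lra)).
  replace (h t - L) with (a * (f t - l) + b * (g t - m)) by (rewrite Hh, <- HL; ring).
  eapply Rle_lt_trans; [apply Rabs_triang|]. rewrite !Rabs_mult.
  pose proof (Rabs_pos (f t - l)). pose proof (Rabs_pos (g t - m)). nra.
Qed.

(* Take the last crossing of the level [c] before [t0] and apply the mean value theorem. *)
Lemma lim_minus_infty_descent (f f' : R -> R) l c t0 :
  (forall s, s <= t0 -> derivable_pt_lim f s (f' s)) -> lim_minus_infty f l ->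
  f t0 < c < l ->
  exists xi, xi < t0 /\ f' xi < 0 /\ forall s, xi <= s <= t0 -> f s < c.
Proof.
  intros Hd Hl Hc.
  destruct (lim_minus_infty_near f l (l - c) t0 Hl ltac:(lra)) as [s1 [Hs1 Hnear]].
  assert (Hfs1 : c < f s1) by (specialize (Hnear s1 (Rle_refl _)); apply Rabs_def2 in Hnear; lra).
  destruct (first_crossing (fun u => f (- u)) (- t0) (- s1) c) as [u [Hu [Hfu Hbelow]]].
  - lra.
  - intros x Hx. apply (continuity_pt_comp (fun u => - u) f).
    + apply continuity_pt_opp, derivable_continuous_pt, derivable_id.
    + exact (derivable_pt_lim_continuity_pt _ _ _ (Hd (- x) ltac:(lra))).
  - rewrite Ropp_involutive; lra.
  - rewrite Ropp_involutive; lra.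
  - destruct (MVT_cor2 f f' (- u) t0 ltac:(lra)) as [xi [Hmvt Hxi]].
    { intros x Hx; apply Hd; lra. }
    exists xi. split; [lra|split].
    + simpl in Hfu. nra.
    + intros s Hs. replace s with (- - s) by ring. apply Hbelow; lra.
Qed.

(* [f e^(-M e^t)] strictly decreases, yet it is squeezed between [0] and [f], which tends to [0]. *)
Lemma nonneg_not_vanishing_at_minus_infty (f f' : R -> R) M T :
  0 <= M -> (forall s, s <= T -> derivable_pt_lim f s (f' s)) ->
  (forall s, s <= T -> 0 <= f s) -> (forall s, s <= T -> f' s < M * exp s * f s) ->
  ~ lim_minus_infty f 0.
Proof.
  intros HM Hd Hnn Hlt Hlim.
  set (phi := fun u => f u * exp (- (M * exp u))).
  assert (Hdec : forall a b, a < b -> b <= T -> phi b < phi a).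
  { intros a b Hab HbT.
    apply (deriv_neg_lt phi (fun u => f' u * exp (- (M * exp u))
                          + f u * (exp (- (M * exp u)) * - (M * exp u)))); [exact Hab| |].
    - intros c Hc. apply (derivable_pt_lim_mul_exp f (fun u => - (M * exp u))).
      + apply Hd; lra.
      + apply (derivable_pt_lim_opp (mult_real_fct M exp)), derivable_pt_lim_scal,
          derivable_pt_lim_exp.
    - intros c Hc. specialize (Hlt c ltac:(lra)). pose proof (exp_pos (- (M * exp c))). nra. }
  assert (Hpos : 0 < phi (T - 1)).
  { assert (phi T < phi (T - 1)) by (apply Hdec; lra).
    assert (0 <= phi T) by (apply Rmult_le_pos; [apply Hnn; lra|left; apply exp_pos]).
    lra. }
  destruct (lim_minus_infty_near f 0 (phi (T - 1)) (T - 1) Hlim Hpos) as [s [Hs Hnear]].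
  specialize (Hnear s (Rle_refl _)). rewrite Rminus_0_r in Hnear. apply Rabs_def2 in Hnear.
  assert (phi (T - 1) < phi s) by (apply Hdec; lra).
  assert (Hexp : exp (- (M * exp s)) <= 1).
  { rewrite <- exp_0. pose proof (exp_pos s).
    destruct (Req_dec (M * exp s) 0) as [->|]; [rewrite Ropp_0; lra|].
    left; apply exp_increasing; nra. }
  assert (0 <= f s) by (apply Hnn; lra).
  unfold phi in *. nra.
Qed.

Lemma in_dom_le tmax s t : in_dom tmax t -> s <= t -> in_dom tmax s.
Proof. destruct tmax; simpl; lra. Qed.

Lemma in_dom_inhabited tmax : exists t, in_dom tmax t.
Proof. destruct tmax as [T|]; [exists (T - 1); simpl; lra|exists 0; exact I]. Qed.

Lemma nondecreasing_ext_lim tmax f t0 :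
  in_dom tmax t0 ->
  (forall s t, t0 <= s -> s <= t -> in_dom tmax t -> f s <= f t) ->
  ext_lim_exists_at_tmax tmax f.
Proof.
  intros H0 Hm.
  set (E := fun y => exists t, t0 <= t /\ in_dom tmax t /\ y = f t).
  destruct (classic (bound E)) as [Hb|Hunb].
  - assert (HE : E (f t0)) by (exists t0; repeat split; auto; lra).
    destruct (completeness E Hb (ex_intro _ _ HE)) as [l [Hub Hlub]].
    left. exists l. intros eps He.
    destruct (classic (exists t1, t0 <= t1 /\ in_dom tmax t1 /\ l - eps < f t1))
      as [[t1 [Ht01 [Ht1 Hlt]]]|Hno].
    + exists t1; split; [exact Ht1|]. intros t Ht1t Ht.
      assert (f t1 <= f t) by (apply Hm; auto; lra).
      assert (f t <= l) by (apply Hub; exists t; repeat split; auto; lra).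
      rewrite Rabs_left1; lra.
    + exfalso. assert (l <= l - eps); [|lra].
      apply Hlub. intros y [t [Ht0 [Ht ->]]]. apply Rnot_lt_le; intro Hlt.
      apply Hno. exists t. auto.
  - right; left. intros M. apply NNPP; intro Hno. apply Hunb. exists M.
    intros y [t [Ht0 [Ht ->]]]. apply Rnot_lt_le; intro Hlt.
    apply Hno. exists t. split; [exact Ht|].
    intros s Hts Hs. assert (f t <= f s) by (apply Hm; auto; lra). lra.
Qed.

Lemma ext_lim_exists_opp tmax f :
  ext_lim_exists_at_tmax tmax (fun t => - f t) -> ext_lim_exists_at_tmax tmax f.
Proof.
  intros [[l Hl]|[Hp|Hm]].
  - left. exists (- l). intros eps He. destruct (Hl eps He) as [t1 [Ht1 Hnear]].
    exists t1; split; [exact Ht1|]. intros t Ht1t Ht.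
    rewrite <- Rabs_Ropp. replace (- (f t - - l)) with (- f t - l) by ring. auto.
  - right; right. intros M. destruct (Hp (- M)) as [t1 [Ht1 Hgt]].
    exists t1; split; [exact Ht1|]. intros t Ht1t Ht. specialize (Hgt t Ht1t Ht). lra.
  - right; left. intros M. destruct (Hm (- M)) as [t1 [Ht1 Hlt]].
    exists t1; split; [exact Ht1|]. intros t Ht1t Ht. specialize (Hlt t Ht1t Ht). lra.
Qed.

(* Either [f' >= 0] throughout, or [f' < 0] from some time on: [f] is eventually monotone. *)

Lemma ext_lim_of_persistent_neg_deriv tmax (f f' : R -> R) :
  (forall t, in_dom tmax t -> derivable_pt_lim f t (f' t)) ->
  (forall t0, in_dom tmax t0 -> f' t0 < 0 -> forall t, t0 < t -> in_dom tmax t -> f' t < 0) ->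
  ext_lim_exists_at_tmax tmax f.
Proof.
  intros Hd Hneg.
  destruct (classic (exists t0, in_dom tmax t0 /\ f' t0 < 0)) as [[t0 [Ht0 Hf0]]|Hno].
  - apply ext_lim_exists_opp, (nondecreasing_ext_lim tmax _ t0 Ht0).
    intros s t Hs Hst Ht.
    apply (deriv_nonneg_le (fun u => - f u) (fun u => - f' u) s t Hst).
    + intros c Hc. apply (derivable_pt_lim_opp f), Hd, (in_dom_le _ _ _ Ht); lra.
    + intros c Hc. specialize (Hneg t0 Ht0 Hf0 c ltac:(lra) (in_dom_le _ c _ Ht ltac:(lra))).
      lra.
  - destruct (in_dom_inhabited tmax) as [t0 Ht0].
    apply (nondecreasing_ext_lim tmax f t0 Ht0). intros s t Hs Hst Ht.
    apply (deriv_nonneg_le f f' s t Hst).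
    + intros c Hc. apply Hd, (in_dom_le _ _ _ Ht); lra.
    + intros c Hc. apply Rnot_lt_le; intro Hc'. apply Hno. exists c.
      split; [apply (in_dom_le _ _ _ Ht); lra|exact Hc'].
Qed.

Section SystemS.

Variables (d a3 C : R) (tmax : option R) (X Y Z W g : R -> R).

Let energy t := d * X t ^ 2 + Z t ^ 2 - 1.
Let ratio t := W t / Y t.

Hypothesis d_ge1 : 1 <= d.
Hypothesis a3_ge0 : 0 <= a3.
Hypothesis C_pos : 0 < C.
Hypothesis Y_W_pos : forall t, in_dom tmax t -> 0 < Y t /\ 0 < W t.
Hypothesis g_pos : forall t, in_dom tmax t -> 0 < g t.
Hypothesis X_lim : lim_minus_infty X 0.
Hypothesis Z_lim : lim_minus_infty Z 1.
Hypothesis X_deriv : forall t, in_dom tmax t ->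
  derivable_pt_lim X t (X t * energy t + (d + 2) * Y t ^ 2 - 2 * a3 / d * W t ^ 2).
Hypothesis Y_deriv : forall t, in_dom tmax t ->
  derivable_pt_lim Y t (Y t * (d * X t ^ 2 + Z t ^ 2 - X t)).
Hypothesis Z_deriv : forall t, in_dom tmax t ->
  derivable_pt_lim Z t (Z t * energy t + a3 * W t ^ 2).
Hypothesis W_deriv : forall t, in_dom tmax t ->
  derivable_pt_lim W t (W t * (d * X t ^ 2 + Z t ^ 2 - 2 * X t + Z t)).
Hypothesis first_integral : forall t, in_dom tmax t ->
  d * X t ^ 2 + d * (d + 2) * Y t ^ 2 + Z t ^ 2 - a3 * W t ^ 2 = 1 - C * (g t * Y t) ^ 2.

Lemma ratio_pos t : in_dom tmax t -> 0 < ratio t.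
Proof. intros Ht. destruct (Y_W_pos t Ht). apply Rdiv_lt_0_compat; assumption. Qed.

Lemma ratio_deriv t : in_dom tmax t -> derivable_pt_lim ratio t (ratio t * (Z t - X t)).
Proof.
  intros Ht. destruct (Y_W_pos t Ht) as [HY HW].
  replace (ratio t * (Z t - X t)) with
    ((W t * (d * X t ^ 2 + Z t ^ 2 - 2 * X t + Z t) * Y t
      - Y t * (d * X t ^ 2 + Z t ^ 2 - X t) * W t) / (Y t)²)
    by (unfold ratio, Rsqr; field; lra).
  apply (derivable_pt_lim_div W Y); [apply W_deriv, Ht|apply Y_deriv, Ht|lra].
Qed.

Lemma C_L2_pos t : in_dom tmax t -> 0 < C * (g t * Y t) ^ 2.
Proof.
  intros Ht. destruct (Y_W_pos t Ht). pose proof (g_pos t Ht).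
  apply Rmult_lt_0_compat; [exact C_pos|apply pow_lt, Rmult_lt_0_compat; assumption].
Qed.

Lemma energy_eq t : in_dom tmax t ->
  energy t = - C * (g t * Y t) ^ 2 - Y t ^ 2 * (d * (d + 2) - a3 * ratio t ^ 2).
Proof.
  intros Ht. destruct (Y_W_pos t Ht). pose proof (first_integral t Ht).
  unfold energy, ratio. field_simplify; [lra|lra].
Qed.

Lemma a3_ratio_sq_le a b : in_dom tmax a -> ratio a < ratio b ->
  a3 * ratio a ^ 2 <= a3 * ratio b ^ 2.
Proof. intros Ha Hab. pose proof (ratio_pos a Ha). apply Rmult_le_compat_l; nra. Qed.

Lemma X_deriv_ratio t : in_dom tmax t ->
  derivable_pt_lim X t (X t * energy t + Y t ^ 2 * (d * (d + 2) - 2 * a3 * ratio t ^ 2) / d).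
Proof.
  intros Ht. destruct (Y_W_pos t Ht).
  replace (X t * energy t + Y t ^ 2 * (d * (d + 2) - 2 * a3 * ratio t ^ 2) / d)
    with (X t * energy t + (d + 2) * Y t ^ 2 - 2 * a3 / d * W t ^ 2)
    by (unfold ratio; field; lra).
  exact (X_deriv t Ht).
Qed.

Lemma S_deriv t : in_dom tmax t ->
  derivable_pt_lim (fun s => d * X s + Z s - 1) t
    ((d * X t + Z t - 1) * energy t - C * (g t * Y t) ^ 2).
Proof.
  intros Ht. pose proof (first_integral t Ht).
  replace ((d * X t + Z t - 1) * energy t - C * (g t * Y t) ^ 2)
    with (d * (X t * energy t + (d + 2) * Y t ^ 2 - 2 * a3 / d * W t ^ 2)
          + (Z t * energy t + a3 * W t ^ 2) - 0)
    by (unfold energy in *; field_simplify; [nra|lra]).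
  apply (derivable_pt_lim_minus (fun s => d * X s + Z s) (fct_cte 1));
    [|apply derivable_pt_lim_const].
  apply (derivable_pt_lim_plus (mult_real_fct d X) Z);
    [apply derivable_pt_lim_scal, X_deriv, Ht|apply Z_deriv, Ht].
Qed.

Lemma V_deriv t : in_dom tmax t ->
  derivable_pt_lim (fun s => Z s - X s) t
    ((Z t - X t) * energy t + (d + 2) / d * Y t ^ 2 * (a3 * ratio t ^ 2 - d)).
Proof.
  intros Ht. destruct (Y_W_pos t Ht).
  replace ((Z t - X t) * energy t + (d + 2) / d * Y t ^ 2 * (a3 * ratio t ^ 2 - d))
    with ((Z t * energy t + a3 * W t ^ 2)
          - (X t * energy t + (d + 2) * Y t ^ 2 - 2 * a3 / d * W t ^ 2))
    by (unfold ratio; field; lra).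
  apply (derivable_pt_lim_minus Z X); [apply Z_deriv|apply X_deriv]; exact Ht.
Qed.

Lemma Z_pos t : in_dom tmax t -> 0 < Z t.
Proof.
  intros Ht.
  destruct (lim_minus_infty_near Z 1 (1 / 2) t Z_lim ltac:(lra)) as [T [HTt Hnear]].
  specialize (Hnear T (Rle_refl _)). apply Rabs_def2 in Hnear.
  apply (pos_persists Z (fun u => Z u * energy u + a3 * W u ^ 2) T t); [lra| |lra|].
  - intros x Hx. apply Z_deriv, (in_dom_le _ x _ Ht); lra.
  - intros x Hx HZx. unfold energy.
    assert (0 <= Z x * (d * X x ^ 2 + Z x ^ 2)) by (apply Rmult_le_pos; nra).
    assert (0 <= a3 * W x ^ 2) by (apply Rmult_le_pos; nra).
    lra.
Qed.

Lemma S_neg_persists s t : in_dom tmax t -> s < t ->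
  d * X s + Z s - 1 < 0 -> d * X t + Z t - 1 < 0.
Proof.
  intros Ht Hst Hs.
  apply (neg_persists (fun u => d * X u + Z u - 1)
           (fun u => (d * X u + Z u - 1) * energy u - C * (g u * Y u) ^ 2) s t Hst); [|exact Hs|].
  - intros x Hx. apply S_deriv, (in_dom_le _ x _ Ht); lra.
  - intros t1 Ht1 HS1 _. rewrite HS1.
    pose proof (C_L2_pos t1 (in_dom_le _ t1 _ Ht ltac:(lra))). lra.
Qed.

(* Near [-oo], [W'/W] is close to [2], so [W] decays at least like [e^t]. *)
Lemma W_sq_exp_bound t : in_dom tmax t ->
  exists T M, T < t /\ 0 <= M /\ forall s, s <= T -> a3 * W s ^ 2 <= M * exp s.
Proof.
  intros Ht.
  destruct (lim_minus_infty_near X 0 (1 / 10) t X_lim ltac:(lra)) as [T1 [HT1 HX]].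
  destruct (lim_minus_infty_near Z 1 (1 / 10) T1 Z_lim ltac:(lra)) as [T [HT HZ]].
  assert (Hdom : forall s, s <= T -> in_dom tmax s) by (intros s Hs; apply (in_dom_le _ s _ Ht); lra).
  assert (Hgrow : forall s, s <= T -> W s <= W T * exp (s - T)).
  { apply (le_mul_exp_of_le_deriv W (fun u => W u * (d * X u ^ 2 + Z u ^ 2 - 2 * X u + Z u))).
    - intros s Hs. apply W_deriv, Hdom, Hs.
    - intros s Hs. destruct (Y_W_pos s (Hdom s Hs)) as [_ HWs].
      specialize (HX s ltac:(lra)). specialize (HZ s Hs).
      rewrite Rminus_0_r in HX. apply Rabs_def2 in HX. apply Rabs_def2 in HZ.
      assert (1 <= d * X s ^ 2 + Z s ^ 2 - 2 * X s + Z s) by nra. nra. }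
  exists T, (a3 * W T ^ 2 * exp (- T)). split; [lra|split].
  - pose proof (exp_pos (- T)). apply Rmult_le_pos; [apply Rmult_le_pos; nra|lra].
  - intros s Hs. destruct (Y_W_pos s (Hdom s Hs)) as [_ HWs].
    specialize (Hgrow s Hs).
    assert (Hexp : exp (s - T) <= 1).
    { rewrite <- exp_0. destruct (Req_dec s T) as [->|]; [rewrite Rminus_diag; lra|].
      left; apply exp_increasing; lra. }
    assert (Hsplit : exp (s - T) = exp (- T) * exp s) by (rewrite <- exp_plus; f_equal; ring).
    pose proof (exp_pos (s - T)).
    assert (W s ^ 2 <= W T ^ 2 * exp (s - T)) by nra.
    rewrite Hsplit in *. rewrite !Rmult_assoc. apply Rmult_le_compat_l; [exact a3_ge0|]. nra.
Qed.

(* If [S = dX + Z - 1] were nonnegative somewhere, it would be nonnegative on a whole half-line,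
   where [S' = S E - C L^2 < S a3 W^2 <= M e^t S]; but [S -> 0] at [-oo]. *)
Lemma S_neg t : in_dom tmax t -> d * X t + Z t - 1 < 0.
Proof.
  intros Ht. apply Rnot_le_lt; intro HSt.
  assert (Hnn : forall s, s <= t -> 0 <= d * X s + Z s - 1).
  { intros s Hs. apply Rnot_lt_le; intro HSs.
    destruct (Req_dec s t) as [->|]; [lra|].
    pose proof (S_neg_persists s t Ht ltac:(lra) HSs). lra. }
  destruct (W_sq_exp_bound t Ht) as [T [M [HTt [HM Hbound]]]].
  assert (Hdom : forall s, s <= T -> in_dom tmax s) by (intros s Hs; apply (in_dom_le _ s _ Ht); lra).
  apply (nonneg_not_vanishing_at_minus_infty (fun s => d * X s + Z s - 1)
           (fun s => (d * X s + Z s - 1) * energy s - C * (g s * Y s) ^ 2) M T HM).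
  - intros s Hs. apply S_deriv, Hdom, Hs.
  - intros s Hs. apply Hnn. lra.
  - intros s Hs.
    assert (Henergy : energy s <= M * exp s).
    { specialize (Hbound s Hs). pose proof (first_integral s (Hdom s Hs)).
      pose proof (C_L2_pos s (Hdom s Hs)).
      assert (0 <= d * (d + 2) * Y s ^ 2) by (apply Rmult_le_pos; nra).
      unfold energy. lra. }
    specialize (Hnn s ltac:(lra)). pose proof (C_L2_pos s (Hdom s Hs)). nra.
  - apply (lim_minus_infty_lincomb X Z _ 0 1 d 1 (-1)); [intros; ring|ring|exact X_lim|exact Z_lim].
Qed.

Lemma energy_neg_of_ratio_small t : in_dom tmax t ->
  2 * a3 * ratio t ^ 2 <= d * (d + 2) -> energy t < 0.
Proof.
  intros Ht Hsmall. rewrite (energy_eq t Ht).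
  pose proof (C_L2_pos t Ht). destruct (Y_W_pos t Ht).
  assert (0 <= a3 * ratio t ^ 2) by (apply Rmult_le_pos; nra).
  assert (0 <= Y t ^ 2 * (d * (d + 2) - a3 * ratio t ^ 2)) by (apply Rmult_le_pos; nra).
  lra.
Qed.

(* With [0 < Z < X] and [dX + Z < 1]: [dX^2 + Z^2 <= (dX + Z)^2 < 1] since [d >= 1]. *)
Lemma energy_neg_of_Z_lt_X t : in_dom tmax t -> Z t < X t -> energy t < 0.
Proof.
  intros Ht HZX. pose proof (Z_pos t Ht). pose proof (S_neg t Ht).
  assert (0 <= d * (d - 1) * X t ^ 2) by (apply Rmult_le_pos; nra).
  assert (0 <= d * (X t * Z t)) by (apply Rmult_le_pos; nra).
  assert ((d * X t + Z t) ^ 2 < 1) by nra.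
  unfold energy. nra.
Qed.

Lemma ratio_increasing a b : in_dom tmax b -> a < b ->
  (forall s, a < s < b -> X s < 0) -> ratio a < ratio b.
Proof.
  intros Hb Hab HX.
  apply (deriv_pos_lt ratio (fun u => ratio u * (Z u - X u)) a b Hab).
  - intros c Hc. apply ratio_deriv, (in_dom_le _ c _ Hb); lra.
  - intros c Hc. assert (Hc' : in_dom tmax c) by (apply (in_dom_le _ c _ Hb); lra).
    pose proof (ratio_pos c Hc'). pose proof (Z_pos c Hc'). specialize (HX c Hc).
    apply Rmult_lt_0_compat; lra.
Qed.

Lemma ratio_decreasing a b : in_dom tmax b -> a < b ->
  (forall s, a < s < b -> Z s - X s < 0) -> ratio b < ratio a.
Proof.
  intros Hb Hab HV.
  apply (deriv_neg_lt ratio (fun u => ratio u * (Z u - X u)) a b Hab).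
  - intros c Hc. apply ratio_deriv, (in_dom_le _ c _ Hb); lra.
  - intros c Hc. pose proof (ratio_pos c (in_dom_le _ c _ Hb ltac:(lra))).
    specialize (HV c Hc). nra.
Qed.

(* While [X < 0], [W/Y] increases, so [Q = d(d+2) - 2 a3 (W/Y)^2] decreases.  [Q(t0) >= 0] is
   impossible: on the way down from [X = 0] at [-oo], [X' = XE + Y^2 Q/d] would be positive. *)
Lemma X_neg_persists t0 t : in_dom tmax t -> t0 < t -> X t0 < 0 -> X t < 0.
Proof.
  intros Ht Ht0t HX0.
  assert (Ht0 : in_dom tmax t0) by (apply (in_dom_le _ t0 _ Ht); lra).
  assert (HdX : forall s, s <= t -> derivable_pt_lim X s
            (X s * energy s + Y s ^ 2 * (d * (d + 2) - 2 * a3 * ratio s ^ 2) / d))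
    by (intros s Hs; apply X_deriv_ratio, (in_dom_le _ s _ Ht), Hs).
  assert (HQ0 : d * (d + 2) - 2 * a3 * ratio t0 ^ 2 < 0).
  { apply Rnot_le_lt; intro HQ0.
    destruct (lim_minus_infty_descent X _ 0 (X t0 / 2) t0
                (fun s Hs => HdX s (Rle_trans _ _ _ Hs (Rlt_le _ _ Ht0t))) X_lim)
      as [xi [Hxi [HdXxi Hbelow]]]; [lra|].
    assert (Hxid : in_dom tmax xi) by (apply (in_dom_le _ xi _ Ht0); lra).
    assert (Hr : ratio xi < ratio t0).
    { apply ratio_increasing; [exact Ht0|exact Hxi|].
      intros s Hs. assert (X s < X t0 / 2) by (apply Hbelow; lra). lra. }
    pose proof (a3_ratio_sq_le xi t0 Hxid Hr).
    assert (Henergy : energy xi < 0) by (apply energy_neg_of_ratio_small; [exact Hxid|lra]).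
    assert (HXxi : X xi < 0) by (assert (X xi < X t0 / 2) by (apply Hbelow; lra); lra).
    assert (0 <= Y xi ^ 2 * (d * (d + 2) - 2 * a3 * ratio xi ^ 2) / d).
    { apply Rmult_le_pos; [apply Rmult_le_pos; nra|left; apply Rinv_0_lt_compat; lra]. }
    nra. }
  apply (neg_persists X _ t0 t Ht0t (fun s Hs => HdX s (proj2 Hs)) HX0).
  intros t1 Ht1 HX1 Hbelow. rewrite HX1.
  assert (Ht1d : in_dom tmax t1) by (apply (in_dom_le _ t1 _ Ht); lra).
  assert (Hr : ratio t0 < ratio t1) by (apply ratio_increasing; [exact Ht1d|lra|];
    intros s Hs; apply Hbelow; lra).
  pose proof (a3_ratio_sq_le t0 t1 Ht0 Hr). destruct (Y_W_pos t1 Ht1d).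
  assert (0 < Y t1 ^ 2) by (apply pow_lt; lra).
  assert (d * (d + 2) - 2 * a3 * ratio t1 ^ 2 < 0) by lra.
  assert (Y t1 ^ 2 * (d * (d + 2) - 2 * a3 * ratio t1 ^ 2) < 0) by nra.
  assert (Y t1 ^ 2 * (d * (d + 2) - 2 * a3 * ratio t1 ^ 2) / d < 0).
  { pose proof (Rinv_0_lt_compat d ltac:(lra)). unfold Rdiv. nra. }
  lra.
Qed.

(* The same scheme for [V = Z - X]: while [V < 0], [W/Y] decreases, so [P = a3 (W/Y)^2 - d]
   decreases, and [V' = V E + (d+2)/d Y^2 P] with [E < 0] since [X > Z > 0]. *)
Lemma V_neg_persists t0 t : in_dom tmax t -> t0 < t -> Z t0 - X t0 < 0 -> Z t - X t < 0.
Proof.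
  intros Ht Ht0t HV0.
  assert (Ht0 : in_dom tmax t0) by (apply (in_dom_le _ t0 _ Ht); lra).
  assert (HdV : forall s, s <= t -> derivable_pt_lim (fun u => Z u - X u) s
            ((Z s - X s) * energy s + (d + 2) / d * Y s ^ 2 * (a3 * ratio s ^ 2 - d)))
    by (intros s Hs; apply V_deriv, (in_dom_le _ s _ Ht), Hs).
  assert (Hcoef : 0 < (d + 2) / d) by (apply Rdiv_lt_0_compat; lra).
  assert (HP0 : a3 * ratio t0 ^ 2 - d < 0).
  { apply Rnot_le_lt; intro HP0.
    assert (HVlim : lim_minus_infty (fun u => Z u - X u) 1)
      by (apply (lim_minus_infty_lincomb X Z _ 0 1 (-1) 1 0);
          [intros; ring|ring|exact X_lim|exact Z_lim]).
    destruct (lim_minus_infty_descent _ _ 1 ((Z t0 - X t0) / 2) t0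
                (fun s Hs => HdV s (Rle_trans _ _ _ Hs (Rlt_le _ _ Ht0t))) HVlim)
      as [xi [Hxi [HdVxi Hbelow]]]; [lra|].
    assert (Hxid : in_dom tmax xi) by (apply (in_dom_le _ xi _ Ht0); lra).
    assert (HVxi : Z xi - X xi < 0)
      by (assert (Z xi - X xi < (Z t0 - X t0) / 2) by (apply Hbelow; lra); lra).
    assert (Hr : ratio t0 < ratio xi).
    { apply ratio_decreasing; [exact Ht0|exact Hxi|].
      intros s Hs. assert (Z s - X s < (Z t0 - X t0) / 2) by (apply Hbelow; lra). lra. }
    pose proof (a3_ratio_sq_le t0 xi Ht0 Hr).
    assert (Henergy : energy xi < 0) by (apply energy_neg_of_Z_lt_X; [exact Hxid|lra]).
    assert (0 <= (d + 2) / d * Y xi ^ 2 * (a3 * ratio xi ^ 2 - d))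
      by (apply Rmult_le_pos; [apply Rmult_le_pos; nra|lra]).
    nra. }
  apply (neg_persists (fun u => Z u - X u) _ t0 t Ht0t (fun s Hs => HdV s (proj2 Hs)) HV0).
  intros t1 Ht1 HV1 Hbelow. rewrite HV1.
  assert (Ht1d : in_dom tmax t1) by (apply (in_dom_le _ t1 _ Ht); lra).
  assert (Hr : ratio t1 < ratio t0) by (apply ratio_decreasing; [exact Ht1d|lra|];
    intros s Hs; apply Hbelow; lra).
  pose proof (a3_ratio_sq_le t1 t0 Ht1d Hr). destruct (Y_W_pos t1 Ht1d).
  assert (0 < (d + 2) / d * Y t1 ^ 2) by (apply Rmult_lt_0_compat; [lra|apply pow_lt; lra]).
  assert (a3 * ratio t1 ^ 2 - d < 0) by lra.
  assert ((d + 2) / d * Y t1 ^ 2 * (a3 * ratio t1 ^ 2 - d) < 0) by nra.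
  lra.
Qed.

Lemma sign_persistence_and_limits :
  (forall t, in_dom tmax t -> derivable_pt_lim g t (g t * X t)) ->
  (forall t0, in_dom tmax t0 -> X t0 < 0 ->
     forall t, t0 < t -> in_dom tmax t -> X t < 0) /\
  (forall t0, in_dom tmax t0 -> Z t0 - X t0 < 0 ->
     forall t, t0 < t -> in_dom tmax t -> Z t - X t < 0) /\
  ext_lim_exists_at_tmax tmax g /\ ext_lim_exists_at_tmax tmax ratio.
Proof.
  intros g_deriv. split; [|split; [|split]].
  - intros t0 _ HX0 t Ht0t Ht. exact (X_neg_persists t0 t Ht Ht0t HX0).
  - intros t0 _ HV0 t Ht0t Ht. exact (V_neg_persists t0 t Ht Ht0t HV0).
  - apply (ext_lim_of_persistent_neg_deriv tmax g _ g_deriv).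
    intros t0 Ht0 Hneg t Ht0t Ht.
    pose proof (g_pos t0 Ht0). pose proof (g_pos t Ht).
    assert (X t0 < 0) by nra.
    pose proof (X_neg_persists t0 t Ht Ht0t ltac:(assumption)). nra.
  - apply (ext_lim_of_persistent_neg_deriv tmax ratio _ ratio_deriv).
    intros t0 Ht0 Hneg t Ht0t Ht.
    pose proof (ratio_pos t0 Ht0). pose proof (ratio_pos t Ht).
    assert (Z t0 - X t0 < 0) by nra.
    pose proof (V_neg_persists t0 t Ht Ht0t ltac:(assumption)). nra.
Qed.

End SystemS.

Theorem lemma5p1 (d : nat) (q : R) (tmax : option R)
  (X Y Z W g : R -> R) (C : R) :
  (1 <= d)%nat ->
  solves_S d q tmax X Y Z W ->
  (forall t, in_dom tmax t -> 0 < Y t /\ 0 < W t) ->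
  lim_minus_infty X 0 -> lim_minus_infty Y 0 ->
  lim_minus_infty Z 1 -> lim_minus_infty W 0 ->
  (forall t, in_dom tmax t -> 0 < g t /\ derivable_pt_lim g t (g t * X t)) ->
  (forall t, in_dom tmax t ->
     INR d * X t ^ 2 + A2 d * Y t ^ 2 + Z t ^ 2 - A3 d q * W t ^ 2
       = 1 - C * (g t * Y t) ^ 2) ->
  0 < C ->
  (forall t0, in_dom tmax t0 -> X t0 < 0 ->
     forall t, t0 < t -> in_dom tmax t -> X t < 0) /\
  (forall t0, in_dom tmax t0 -> Z t0 - X t0 < 0 ->
     forall t, t0 < t -> in_dom tmax t -> Z t - X t < 0) /\
  ext_lim_exists_at_tmax tmax g /\
  ext_lim_exists_at_tmax tmax (fun t => W t / Y t).
Proof.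
  intros Hd1 HS HYW HX _ HZ _ Hg HFI HC.
  assert (Hd : 1 <= INR d) by (apply (le_INR 1 d) in Hd1; exact Hd1).
  assert (Ha3 : 0 <= A3 d q).
  { unfold A3. pose proof (Rinv_0_lt_compat 4 ltac:(lra)).
    apply Rmult_le_pos; [|apply pow2_ge_0].
    apply Rmult_le_pos; [|apply pow2_ge_0].
    apply Rmult_le_pos; lra. }
  assert (HdX : forall t, in_dom tmax t -> derivable_pt_lim X t
            (X t * (INR d * X t ^ 2 + Z t ^ 2 - 1) + (INR d + 2) * Y t ^ 2
             - 2 * A3 d q / INR d * W t ^ 2)).
  { intros t Ht. destruct (HS t Ht) as [HdX _].
    replace (INR d + 2) with (A2 d / INR d) by (unfold A2; field; lra).
    replace (2 * A3 d q / INR d) with (2 * (A3 d q / INR d)) by (unfold Rdiv; ring).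
    exact HdX. }
  exact (sign_persistence_and_limits (INR d) (A3 d q) C tmax X Y Z W g Hd Ha3 HC HYW
           (fun t Ht => proj1 (Hg t Ht)) HX HZ HdX
           (fun t Ht => proj1 (proj2 (HS t Ht)))
           (fun t Ht => proj1 (proj2 (proj2 (HS t Ht))))
           (fun t Ht => proj2 (proj2 (proj2 (HS t Ht))))
           HFI (fun t Ht => proj2 (Hg t Ht))).
Qed.
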